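(* For every $d \in \{2,3,4,5,8,12,16,24,40\}$, the sequence $\left(\left\lfloor n^4/d \right\rfloor\right)_{n \ge 1}$ is eventually prime-free.
   Context: A sequence $(a_n)_{n\ge 1}$ of positive integers is called eventually prime-free if there exists an index $n_0$ such that $a_n$ is composite for all $n \ge n_0$. (Here, as in the paper, this is understood as: only finitely many terms $a_n$ are prime.) *)

From mathcomp Require Import all_boot.
Definition eventually_prime_free (a : nat -> nat) : Prop :=
  exists n0 : nat, forall n : nat, n0 <= n -> ~~ prime (a n).

(* If the residue of n^4 modulo d is a square c^2, then
   d * (n^4 %/ d) = n^4 - c^2 = (n^2 - c) (n^2 + c), and for n > d both
   factors exceed d. A prime p with p d = a b divides a or b, which forces
   the other factor to divide d; so n^4 %/ d cannot be prime. For each listed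
   d, every fourth power modulo d is a square, as a finite check over the
   residues shows. *)
From mathcomp Require Import all_boot.
From mathcomp Require Import zify.

Lemma mul_eq_not_prime k d a b :
  d < a -> d < b -> k * d = a * b -> ~~ prime k.
Proof.
move=> lt_da lt_db eq_kd; apply/negP => pr_k.
wlog /dvdnP[t def_a] : a b lt_da lt_db eq_kd / k %| a.
  move=> IH; have : k %| a * b by rewrite -eq_kd dvdn_mulr.
  rewrite Euclid_dvdM // => /orP[]; first exact: IH lt_da lt_db eq_kd.
  by apply: IH lt_db lt_da _; rewrite eq_kd mulnC.
have def_d : d = t * b.
  by apply/eqP; rewrite -(eqn_pmul2l (prime_gt0 pr_k)) eq_kd def_a mulnCA mulnA.
have t_gt0 : 0 < t by case: t def_a {def_d} => // def_a; rewrite def_a in lt_da.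
nia.
Qed.

Lemma quartic_quotient_not_prime d n c :
  n ^ 4 %% d = c ^ 2 -> d < n -> ~~ prime (n ^ 4 %/ d).
Proof.
move=> def_c lt_dn; have [-> | d_gt0] := posnP d; first by rewrite divn0.
have lt_cd : c < d.
  by rewrite -ltn_sqr -def_c; apply: leq_trans (ltn_pmod _ d_gt0) _; nia.
apply: (@mul_eq_not_prime _ d (n ^ 2 - c) (n ^ 2 + c)); [nia | nia |].
by rewrite -subn_sqr -def_c -expnM {2}(divn_eq (n ^ 4) d) addnK.
Qed.

Definition quartic_residues_square (d : nat) : bool :=
  all (fun r => r ^ 4 %% d \in [seq c ^ 2 | c <- iota 0 d]) (iota 0 d).

Lemma quartic_residues_squareP d :
  0 < d -> quartic_residues_square d -> forall n, exists c, n ^ 4 %% d = c ^ 2.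
Proof.
move=> d_gt0 /allP sq_d n.
have /mapP[c _ def_c] : n ^ 4 %% d \in [seq c ^ 2 | c <- iota 0 d].
  by rewrite -modnXm; apply: sq_d; rewrite mem_iota ltn_pmod.
by exists c.
Qed.

Lemma quartic_quotient_prime_free d :
  0 < d -> quartic_residues_square d ->
  eventually_prime_free (fun n => n ^ 4 %/ d).
Proof.
move=> d_gt0 sq_d; exists d.+1 => n lt_dn.
have [c def_c] := quartic_residues_squareP _ d_gt0 sq_d n.
exact: quartic_quotient_not_prime def_c lt_dn.
Qed.

Theorem theorem3 (d : nat) :
  d \in [:: 2; 3; 4; 5; 8; 12; 16; 24; 40] ->
  eventually_prime_free (fun n => n ^ 4 %/ d).
Proof.
have : all (fun d => (0 < d) && quartic_residues_square d)
           [:: 2; 3; 4; 5; 8; 12; 16; 24; 40] by vm_compute.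
by move/allP => all_d /all_d/andP[d_gt0 sq_d]; apply: quartic_quotient_prime_free.
Qed.
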